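(* Let $\sigma,\tau\in S_n$ be almost similar permutations of order $m$, and let $\mathrm{fix}(\sigma)$ denote the number of fixed points of $\sigma$. Then: (1) if $\mathrm{fix}(\sigma)=\mathrm{fix}(\tau)$, then $\sigma$ and $\tau$ are conjugate in $S_n$; (2) for every prime $p$ dividing $m$, $p$ divides $\mathrm{fix}(\sigma)-\mathrm{fix}(\tau)$.
   Context: Two permutations $\sigma,\tau\in S_n$ are called almost similar if they have the same order $m$ and for every divisor $k\neq1$ of $m$, $\sigma^k$ and $\tau^k$ are conjugate in $S_n$. *)

From mathcomp Require Import all_boot all_order all_fingroup.
From mathcomp Require Import all_algebra.
Set Implicit Arguments. Unset Strict Implicit. Unset Printing Implicit Defensive.

Definition conj_Sn (n : nat) (s t : 'S_n) : Prop :=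
  exists g : 'S_n, t = (s ^ g)%g.

Definition almost_similar (n : nat) (s t : 'S_n) : Prop :=
  #[s]%g = #[t]%g /\
  forall k : nat, k %| #[s]%g -> k != 1 -> conj_Sn (s ^+ k)%g (t ^+ k)%g.

Definition nfix (n : nat) (s : 'S_n) : nat := #|[set x : 'I_n | s x == x]|.

(* The number of fixed points of s^k counts the points whose s-cycle length divides k,
   so by Moebius inversion the function k |-> fix(s^k) determines the cycle type of s.
   Since fix(s^k) only depends on gcd(k, m), almost similarity gives fix(s^k) = fix(t^k)
   for every k whose gcd with m is not 1, and the remaining case is fix(s) = fix(t).
   For a prime p dividing m, fix(s^p) = fix(s) + p * (number of p-cycles of s),
   whence the congruence. *)

From mathcomp Require Import all_boot all_order all_fingroup all_algebra.
From mathcomp Require Import zify.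

Set Implicit Arguments. Unset Strict Implicit. Unset Printing Implicit Defensive.

Section CycleLength.

Variable T : finType.
Implicit Types s : {perm T}.
Local Open Scope group_scope.

Definition porder s x := #|porbit s x|.

Lemma porder_gt0 s x : 0 < porder s x.
Proof. by rewrite lt0n card_porbit_neq0. Qed.

Lemma porder_le_card s x : porder s x <= #|T|.
Proof. exact: max_card. Qed.

Lemma porbit_iter s x i : porbit s (iter i s x) = porbit s x.
Proof. by rewrite -permX porbit_perm. Qed.

Lemma iter_porder_mod s x i : iter i s x = iter (i %% porder s x) s x.
Proof.
rewrite {1}(divn_eq i (porder s x)) addnC iterD; congr iter.
by elim: (i %/ _) => //= q IHq; rewrite mulSn iterD IHq iter_porbit.
Qed.

Lemma iter_porder_inj s x : {in gtn (porder s x) &, injective (fun i => iter i s x)}.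
Proof.
move=> i j lti ltj eq_ij; apply/eqP.
rewrite -(nth_uniq x _ _ (uniq_traject_porbit s x)) ?size_traject //.
by rewrite !nth_traject // eq_ij.
Qed.

Lemma permX_fix s x k : ((s ^+ k) x == x) = (porder s x %| k).
Proof.
rewrite permX iter_porder_mod /dvdn; apply/eqP/eqP => [fix_x|->] //.
have inj := @iter_porder_inj s x (k %% porder s x) 0.
by apply: inj; rewrite ?inE ?ltn_pmod ?porder_gt0.
Qed.

Lemma porder_dvd_order s x : porder s x %| #[s].
Proof. by rewrite -permX_fix expg_order perm1. Qed.

Lemma perm_fix s x : (s x == x) = (porder s x == 1%N).
Proof. by rewrite -dvdn1 -permX_fix expg1. Qed.

End CycleLength.

Section CycleRepresentative.

Variable T : finType.
Implicit Types s : {perm T}.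

Definition prep s x := odflt x [pick y in porbit s x].

Lemma prep_porbit s x : prep s x \in porbit s x.
Proof. by rewrite /prep; case: pickP => [//|/(_ x)]; rewrite porbit_id. Qed.

Lemma porbit_prep s x : porbit s (prep s x) = porbit s x.
Proof. by apply/eqP; rewrite eq_porbit_mem prep_porbit. Qed.

Lemma eq_prep s x y : porbit s x = porbit s y -> prep s x = prep s y.
Proof. by rewrite /prep => ->; case: pickP => // /(_ y); rewrite porbit_id. Qed.

Lemma prep_id s x : prep s (prep s x) = prep s x.
Proof. by apply: eq_prep; rewrite porbit_prep. Qed.

Lemma porder_prep s x : porder s (prep s x) = porder s x.
Proof. by rewrite /porder porbit_prep. Qed.

Lemma prep_iter s x i : prep s (iter i s x) = prep s x.
Proof. by apply: eq_prep; rewrite porbit_iter. Qed.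

Lemma eq_prepE s x y : (prep s x == prep s y) = (x \in porbit s y).
Proof.
apply/eqP/idP => [eq_xy|]; last by rewrite -eq_porbit_mem => /eqP/eq_prep.
by rewrite -eq_porbit_mem -(porbit_prep s x) eq_xy porbit_prep.
Qed.

Definition pindex s x := index x (traject s (prep s x) (porder s x)).

Lemma mem_traject_prep s x : x \in traject s (prep s x) (porder s x).
Proof. by rewrite -porder_prep -porbit_traject porbit_prep porbit_id. Qed.

Lemma pindex_lt s x : pindex s x < porder s x.
Proof.
by rewrite /pindex -[ltnRHS](size_traject s (prep s x)) index_mem mem_traject_prep.
Qed.

Lemma iter_pindex s x : iter (pindex s x) s (prep s x) = x.
Proof. by rewrite -(nth_traject _ (pindex_lt s x)) nth_index ?mem_traject_prep. Qed.

End CycleRepresentative.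

Section FixedPointCount.

Variable T : finType.
Implicit Types s t u g : {perm T}.
Local Open Scope group_scope.

Definition nfixed u := #|[set x | u x == x]|.
Definition nporder s d := #|[set x | porder s x == d]|.
Definition cycle_reps s d := [set r | (prep s r == r) && (porder s r == d)].

Lemma nporder_cycle_reps s d : nporder s d = (#|cycle_reps s d| * d)%N.
Proof.
rewrite /nporder -sum1_card (partition_big (prep s) (mem (cycle_reps s d))) /=.
  rewrite -sum_nat_const; apply: eq_bigr => r.
  rewrite inE => /andP[/eqP rep_r /eqP <-] {d}.
  rewrite [RHS]/porder -sum1_card; apply: eq_bigl => x.
  rewrite inE -[X in prep s x == X]rep_r eq_prepE.
  have [|] := boolP (x \in porbit s r); rewrite ?andbF ?andbT //.
  by rewrite -eq_porbit_mem => /eqP eq_xr; rewrite /porder eq_xr eqxx.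
by move=> x; rewrite !inE prep_id porder_prep => ->; rewrite eqxx.
Qed.

Lemma nfixedX_sum s k : nfixed (s ^+ k) = \sum_(d < #|T|.+1 | d %| k) nporder s d.
Proof.
rewrite /nfixed -sum1_card.
rewrite (partition_big (fun x => inord (porder s x) : 'I_#|T|.+1) (fun d => d %| k)).
  apply: eq_bigr => d dvd_dk; rewrite /nporder -sum1_card; apply: eq_bigl => x.
  rewrite !inE permX_fix -[inord _ == d]val_eqE /= inordK ?ltnS ?porder_le_card //.
  by case: eqP => [->|]; rewrite ?andbT ?andbF.
by move=> x; rewrite inE permX_fix inordK ?ltnS ?porder_le_card.
Qed.

Lemma nporder_eq0 s d : (d == 0) || (#|T| < d) -> nporder s d = 0.
Proof.
move=> out_d; apply/eqP; rewrite cards_eq0; apply/eqP/setP => x; rewrite !inE.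
apply/negbTE; apply: contraL out_d => /eqP <-.
by rewrite negb_or -lt0n -leqNgt porder_gt0 porder_le_card.
Qed.

Lemma eq_nporder s t :
  (forall k, 0 < k -> nfixed (s ^+ k) = nfixed (t ^+ k)) -> nporder s =1 nporder t.
Proof.
move=> eq_fix; elim/ltn_ind => -[_ | d IHd]; first by rewrite !nporder_eq0.
have [lt_T_d | le_d_T] := ltnP #|T| d.+1; first by rewrite !nporder_eq0 ?lt_T_d ?orbT.
have := eq_fix d.+1 isT; rewrite !nfixedX_sum.
have dvd_dd : @Ordinal #|T|.+1 d.+1 le_d_T %| d.+1 by rewrite dvdnn.
rewrite !(bigD1 _ dvd_dd) /= => /eqP.
rewrite (eq_bigr (fun i : 'I_#|T|.+1 => nporder t i)).
  by rewrite eqn_add2r => /eqP.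
move=> i /andP[dvd_id neq_id]; apply: IHd.
by rewrite ltn_neqAle dvdn_leq // andbT; rewrite -val_eqE in neq_id.
Qed.

Lemma nfixedJ u g : nfixed (u ^ g) = nfixed u.
Proof.
rewrite /nfixed -(card_preimset _ (@perm_inj _ g)); apply: eq_card => x.
by rewrite !inE permJ (inj_eq perm_inj).
Qed.

Lemma nfixedX_gcd s k : nfixed (s ^+ k) = nfixed (s ^+ gcdn k #[s]).
Proof.
by apply: eq_card => x; rewrite !inE !permX_fix dvdn_gcd porder_dvd_order andbT.
Qed.

Lemma nfixedX_prime s p : prime p -> nfixed (s ^+ p) = nfixed s + nporder s p.
Proof.
move=> p_pr; rewrite /nfixed /nporder -cardsUI.
have -> : [set x | s x == x] :&: [set x | porder s x == p] = set0.
  apply/setP => x; rewrite !inE perm_fix.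
  by case: eqP => [->|] //=; rewrite eq_sym eqn_leq leqNgt prime_gt1.
rewrite cards0 addn0; apply: eq_card => x; rewrite !inE permX_fix perm_fix.
apply/idP/orP => [dvd_p | [] /eqP ->]; rewrite ?dvd1n ?dvdnn //.
by case/primeP: p_pr => _ /(_ _ dvd_p) /orP.
Qed.

End FixedPointCount.

Section ConjugacyFromCycleType.

Variable T : finType.
Variables s t : {perm T}.
Hypothesis eq_cycle_reps : forall d, 0 < d -> #|cycle_reps s d| = #|cycle_reps t d|.
Local Open Scope group_scope.

Definition match_rep r :=
  nth r (enum (cycle_reps t (porder s r))) (index r (enum (cycle_reps s (porder s r)))).

Lemma match_repP r : prep s r = r -> match_rep r \in cycle_reps t (porder s r).
Proof.
move=> rep_r; rewrite /match_rep -mem_enum; apply: mem_nth.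
by rewrite -cardE -eq_cycle_reps ?porder_gt0 // cardE index_mem mem_enum inE rep_r !eqxx.
Qed.

Lemma prep_match_rep r : prep s r = r -> prep t (match_rep r) = match_rep r.
Proof. by move/match_repP; rewrite inE => /andP[/eqP]. Qed.

Lemma porder_match_rep r : prep s r = r -> porder t (match_rep r) = porder s r.
Proof. by move/match_repP; rewrite inE => /andP[_ /eqP]. Qed.

Lemma match_rep_inj r r' :
  prep s r = r -> prep s r' = r' -> match_rep r = match_rep r' -> r = r'.
Proof.
move=> rep_r rep_r' eq_rr'.
have eq_d : porder s r = porder s r'.
  by rewrite -(porder_match_rep rep_r) -(porder_match_rep rep_r') eq_rr'.
set Rs := enum (cycle_reps s (porder s r)); set Rt := enum (cycle_reps t (porder s r)).
have r_Rs : r \in Rs by rewrite mem_enum inE rep_r !eqxx.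
have r'_Rs : r' \in Rs by rewrite mem_enum inE rep_r' eq_d !eqxx.
have size_R : size Rs = size Rt by rewrite -!cardE eq_cycle_reps ?porder_gt0.
move: eq_rr'; rewrite /match_rep -eq_d -/Rs -/Rt (set_nth_default r' r); last first.
  by rewrite -size_R index_mem.
move/eqP; rewrite nth_uniq ?enum_uniq -?size_R ?index_mem // => /eqP eq_idx.
by rewrite -(nth_index r r_Rs) eq_idx nth_index.
Qed.

Definition conjugator x := iter (pindex s x) t (match_rep (prep s x)).

Lemma conjugatorM x : conjugator (s x) = t (conjugator x).
Proof.
have rep_sx : prep s (s x) = prep s x := prep_iter s x 1.
rewrite /conjugator rep_sx -iterS; set r := prep s x.
have rep_r : prep s r = r by rewrite /r prep_id.
have eq_iter : iter (pindex s (s x)) s r = iter (pindex s x).+1 s r.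
  by rewrite /r -rep_sx iter_pindex rep_sx iterS iter_pindex.
rewrite iter_porder_mod [RHS]iter_porder_mod porder_match_rep //; congr iter.
rewrite iter_porder_mod [RHS]iter_porder_mod in eq_iter.
by apply: (iter_porder_inj _ _ eq_iter); rewrite !inE ltn_pmod ?porder_gt0.
Qed.

Lemma conjugator_inj : injective conjugator.
Proof.
move=> x y; rewrite /conjugator => eq_xy.
have rep_x : prep s (prep s x) = prep s x := prep_id s x.
have rep_y : prep s (prep s y) = prep s y := prep_id s y.
have eq_match : match_rep (prep s x) = match_rep (prep s y).
  rewrite -(prep_match_rep rep_x) -(prep_match_rep rep_y); apply: eq_prep.
  by rewrite -(porbit_iter t _ (pindex s x)) eq_xy porbit_iter.
have eq_rep : prep s x = prep s y by apply: match_rep_inj.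
rewrite eq_match in eq_xy.
have eq_idx : pindex s x = pindex s y.
  have eq_porder : porder s x = porder s y by rewrite -porder_prep eq_rep porder_prep.
  apply: (iter_porder_inj _ _ eq_xy); rewrite !inE porder_match_rep // porder_prep.
    by rewrite -eq_porder pindex_lt.
  exact: pindex_lt.
by rewrite -(iter_pindex s x) -(iter_pindex s y) eq_idx eq_rep.
Qed.

Lemma conjg_of_cycle_reps : exists g : {perm T}, t = s ^ g.
Proof.
exists (perm conjugator_inj); apply/permP => y.
by rewrite -[y](permKV (perm conjugator_inj)) permJ !permE conjugatorM.
Qed.

End ConjugacyFromCycleType.

Lemma conjg_of_nporder (T : finType) (s t : {perm T}) :
  nporder s =1 nporder t -> exists g : {perm T}, t = (s ^ g)%g.
Proof.
move=> eq_np; apply: conjg_of_cycle_reps => d d_gt0; apply/eqP.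
by rewrite -(eqn_pmul2r d_gt0) -!nporder_cycle_reps eq_np.
Qed.

Lemma almost_similar_nfixedX n (s t : 'S_n) k :
  almost_similar s t -> k %| #[s]%g -> k != 1 -> nfixed (s ^+ k)%g = nfixed (t ^+ k)%g.
Proof.
by case=> _ conj_pow k_dvd k_neq1; have [g ->] := conj_pow k k_dvd k_neq1; rewrite nfixedJ.
Qed.

Theorem lemma3p7 (n : nat) (s t : 'S_n) :
  almost_similar s t ->
  (nfix s = nfix t -> conj_Sn s t) /\
  (forall p : nat, prime p -> p %| #[s]%g ->
     ((p%:Z) %| ((nfix s)%:Z - (nfix t)%:Z)%R)%Z).
Proof.
move=> st; have [eq_order _] := st.
split=> [eq_fix | p p_pr p_dvd].
  apply: conjg_of_nporder; apply: eq_nporder => k _.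
  rewrite nfixedX_gcd [RHS]nfixedX_gcd -eq_order.
  have [->|gcd_neq1] := eqVneq (gcdn k #[s]%g) 1; first by rewrite !expg1.
  exact: almost_similar_nfixedX (dvdn_gcdr _ _) gcd_neq1.
have := almost_similar_nfixedX st p_dvd (negbT (gtn_eqF (prime_gt1 p_pr))).
rewrite !nfixedX_prime // !nporder_cycle_reps -[nfix s]/(nfixed s) -[nfix t]/(nfixed t).
move=> eq_fixp; apply/dvdzP.
by exists (#|cycle_reps t p|%:Z - #|cycle_reps s p|%:Z)%R; lia.
Qed.
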